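(* Let $F_1$ and $F_2$ be finite fields with $|F_1|\le |F_2|$. Then there exists an $|F_1|\times|F_2|$ Latin-sum array (with $A=F_1$, $B=F_2$) over an alphabet $C$ with $$|C|=\begin{cases}4, & F_1=F_2=\mathbb{Z}_3,\\ |F_2|, & \text{otherwise}.\end{cases}$$
   Context: Let $F_1,F_2$ be finite fields with $|F_1|\le|F_2|$, and let $A\subseteq F_1$, $B\subseteq F_2$ with $|A|\le|B|$. A table $L$ of size $|A|\times|B|$ with entries from a set $C$, whose rows are indexed by the elements of $A$ and columns by the elements of $B$ (entry $L_{x,y}$ for $x\in A,y\in B$), is called a Latin-sum array over $C$ if for every two distinct pairs $(x_1,y_1),(x_2,y_2)\in A\times B$: (i) if $x_1+x_2=0$ in $F_1$ then $L_{x_1,y_1}\ne L_{x_2,y_2}$; and (ii) if $y_1+y_2=0$ in $F_2$ then $L_{x_1,y_1}\ne L_{x_2,y_2}$. *)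

From HB Require Import structures.
From mathcomp Require Import all_boot all_order all_algebra.
Set Implicit Arguments. Unset Strict Implicit. Unset Printing Implicit Defensive.
Import GRing.Theory.
Local Open Scope ring_scope.

Definition latin_sum (F1 F2 : finFieldType) (C : eqType)
    (A : {set F1}) (B : {set F2}) (L : F1 -> F2 -> C) : Prop :=
  forall x1 y1 x2 y2,
    x1 \in A -> y1 \in B -> x2 \in A -> y2 \in B ->
    (x1, y1) != (x2, y2) ->
    (x1 + x2 == 0 -> L x1 y1 != L x2 y2) /\
    (y1 + y2 == 0 -> L x1 y1 != L x2 y2).

From HB Require Import structures.
From mathcomp Require Import all_boot all_order all_algebra fingroup cyclic finfield.
From mathcomp Require Import zify.
Set Implicit Arguments. Unset Strict Implicit. Unset Printing Implicit Defensive.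
Import GRing.Theory FinRing.Theory.

(* Only the involutions x |-> -x of F1 and F2 matter.  Number the elements of a finite
   field F by 0, ..., |F| - 1 so that x and -x get the same number in characteristic 2,
   and mirror numbers i and |F| - 1 - i in odd characteristic (list the elements that
   precede their opposite, then 0, then their opposites in reverse order).  Through
   these numberings a Latin-sum array becomes an integer table whose conflicts are
   described by linear arithmetic, and such tables are written down explicitly in each
   of the four parity cases, with one extra colour when F1 = F2 = Z_3. *)

Definition latin_table (K m n : nat) (R S : rel nat) (M : nat -> nat -> nat) : Prop :=
  (forall i j, i < m -> j < n -> M i j < K) /\
  (forall i1 j1 i2 j2, i1 < m -> j1 < n -> i2 < m -> j2 < n -> (i1 != i2) || (j1 != j2) ->
     (R i1 i2 -> M i1 j1 != M i2 j2) /\ (S j1 j2 -> M i1 j1 != M i2 j2)).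

Definition mirror (c : nat) : rel nat := fun a b => a + b == c.

Definition cyclic_table (n i j : nat) : nat := if i + j < n then i + j else i + j - n.

Lemma cyclic_table_latin m n : m <= n -> latin_table n m n eqn eqn (cyclic_table n).
Proof. by rewrite /cyclic_table => mn; split=> *; repeat case: ifP; lia. Qed.

(* Mirror partners j and 2h - j (j <> h) get the slots j and j + h.  Column j only
   takes the values [mirror_slot h j] and its successor, and row i skips the value i
   that it takes in the middle column. *)
Definition mirror_slot (h j : nat) : nat := if j < h then j else 3 * h - j.

Definition eqn_mirror_table (h i j : nat) : nat :=
  if j == h then i else mirror_slot h j + (i <= mirror_slot h j).

Lemma eqn_mirror_table_latin m h :
  m <= h.*2 -> latin_table h.*2.+1 m h.*2.+1 eqn (mirror h.*2) (eqn_mirror_table h).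
Proof.
by rewrite /eqn_mirror_table /mirror_slot /mirror => mh; split=> *; repeat case: ifP; lia.
Qed.

(* Rows below the middle row k use the colours [0, h), rows above it [h, 2h).  Inside
   its half, row i < k (resp. its partner 2k - i) is the middle row shifted by i + 1
   modulo h, and i < k < h keeps these shifts distinct and nonzero. *)
Definition mirror_eqn_table (k h i j : nat) : nat :=
  if i == k then j else
  let t := j + (if i < k then i else k.*2 - i) + 1 in
  (k < i) * h + (if t < h then t else if t < h.*2 then t - h else t - h.*2).

Lemma mirror_eqn_table_latin k h :
  k < h -> latin_table h.*2 k.*2.+1 h.*2 (mirror k.*2) eqn (mirror_eqn_table k h).
Proof. by rewrite /mirror_eqn_table /mirror => kh; split=> *; repeat case: ifP; lia. Qed.

(* Outside the middle row and column, rows below the middle take only even values and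
   rows above it only odd ones, while columns left of the middle take values below h
   and columns right of it values at least h. *)
Definition mirror_mirror_table (k h i j : nat) : nat :=
  if i == k then (if j == h then h.*2 else mirror_slot h j) else
  if j == h then (if i < k then i else k.*2 - i).*2 + (k < i) else
  if j < h then (k < i : nat) else h.*2 - (k < i).

Lemma mirror_mirror_table_latin k h :
  k <= h -> 1 < h ->
  latin_table h.*2.+1 k.*2.+1 h.*2.+1 (mirror k.*2) (mirror h.*2)
    (mirror_mirror_table k h).
Proof.
rewrite /mirror_mirror_table /mirror_slot /mirror => kh h1.
by split=> *; repeat case: ifP; lia.
Qed.

Definition mirror_table_3x3 (i j : nat) : nat :=
  nth 0 (nth [::] [:: [:: 0; 0; 2]; [:: 0; 2; 1]; [:: 3; 1; 1]] i) j.

Lemma mirror_table_3x3_latin : latin_table 4 3 3 (mirror 2) (mirror 2) mirror_table_3x3.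
Proof.
by split=> [[|[|[|i]]] [|[|[|j]]] | [|[|[|i1]]] [|[|[|j1]]] [|[|[|i2]]] [|[|[|j2]]]].
Qed.

Lemma card_even_of_char2 (F : finNzRingType) : (2%:R : F)%R = 0%R -> 2 %| #|F|.
Proof.
move=> two0; have one_order : #[1%R : F]%g = 2.
  have /(primeP _).2 : #[1%R : F]%g %| 2 by rewrite order_dvdn zmodXgE two0.
  by move=> /(_ isT)/orP[/eqP/eqP|/eqP//]; rewrite order_eq1 oner_eq0.
by rewrite -one_order -cardsT order_dvdG ?inE.
Qed.

Lemma index_rev (T : eqType) (t : seq T) x :
  uniq t -> x \in t -> index x (rev t) + index x t = (size t).-1.
Proof.
move=> t_uniq xt; have lt_xt : index x t < size t by rewrite index_mem.
set j := size t - (index x t).+1; have lt_j : j < size t by lia.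
have nth_j : nth x (rev t) j = x.
  by rewrite nth_rev // (_ : size t - j.+1 = index x t) ?nth_index //; lia.
by rewrite -{1}nth_j index_uniq ?size_rev ?rev_uniq //; lia.
Qed.

Section PalindromicEnum.

Variables (T : finType) (s : T -> T) (z : T).
Hypotheses (sK : involutive s) (s_fixE : forall x, (s x == x) = (x == z)).

Definition mirror_lower : {set T} := [set x | enum_rank x < enum_rank (s x)].

(* Reversing this list and applying s gives it back, so x and s x occupy mirror
   positions. *)
Definition palindromic_enum : seq T :=
  enum mirror_lower ++ z :: rev (map s (enum mirror_lower)).

Let s_inj : injective s := inv_inj sK.

Let s_z : s z = z. Proof. by apply/eqP; rewrite s_fixE. Qed.

Lemma mirror_lowerNs x : x \in mirror_lower -> s x \notin mirror_lower.
Proof. by rewrite !inE sK => lt_x; rewrite -leqNgt ltnW. Qed.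

Lemma mirror_lowerVs x : x != z -> (x \in mirror_lower) || (s x \in mirror_lower).
Proof.
rewrite -s_fixE !inE sK => sx_neq_x.
by rewrite -neq_ltn; apply: contra sx_neq_x => /eqP/val_inj/enum_rank_inj <-.
Qed.

Lemma z_notin_mirror_lower : z \notin mirror_lower.
Proof. by rewrite inE s_z ltnn. Qed.

Lemma palindromic_enumE : map s (rev palindromic_enum) = palindromic_enum.
Proof.
rewrite /palindromic_enum rev_cat rev_cons revK map_cat map_rcons s_z map_rev.
by rewrite -map_comp (eq_map sK) map_id cat_rcons.
Qed.

Lemma mem_palindromic_enum x : x \in palindromic_enum.
Proof.
rewrite mem_cat in_cons mem_enum; have [->|x_neq_z] := eqVneq x z; first by rewrite orbT.
case/orP: (mirror_lowerVs x_neq_z) => [->//|sx_lower].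
by rewrite mem_rev -[x]sK map_f ?orbT ?mem_enum.
Qed.

Lemma palindromic_enum_uniq : uniq palindromic_enum.
Proof.
have mem_image x : (x \in rev (map s (enum mirror_lower))) = (s x \in mirror_lower).
  by rewrite mem_rev -{1}[x]sK (mem_map s_inj) mem_enum.
rewrite cat_uniq /= rev_uniq (map_inj_uniq s_inj) enum_uniq mem_image s_z.
rewrite mem_enum (negbTE z_notin_mirror_lower) /= andbT.
by apply/hasPn=> x; rewrite mem_image mem_enum => /mirror_lowerNs; rewrite sK.
Qed.

Lemma card_palindromic_enum : #|T| = size palindromic_enum.
Proof.
rewrite -(card_uniqP palindromic_enum_uniq); apply: eq_card => x.
by rewrite mem_palindromic_enum.
Qed.

Lemma index_palindromic_enum_mirror x :
  index x palindromic_enum + index (s x) palindromic_enum = (size palindromic_enum).-1.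
Proof.
rewrite addnC -{1}palindromic_enumE (index_map s_inj).
by rewrite index_rev ?palindromic_enum_uniq ?mem_palindromic_enum.
Qed.

Lemma size_palindromic_enum : size palindromic_enum = #|mirror_lower|.*2.+1.
Proof. by rewrite size_cat /= size_rev size_map -cardE addnS addnn. Qed.

End PalindromicEnum.

Definition numbering (V : zmodType) (m : nat) (R : rel nat) (u : V -> nat) : Prop :=
  [/\ injective u, forall x, u x < m & forall x1 x2, (x1 + x2 = 0)%R -> R (u x1) (u x2)].

Lemma enum_rank_numbering (V : finZmodType) :
  (forall x : V, x + x = 0)%R -> numbering #|V| eqn (fun x : V => enum_rank x).
Proof.
move=> two_x0; split=> // [x y /val_inj/enum_rank_inj //|x1 x2 /eqP].
have oppx (x : V) : (- x = x)%R by apply/esym/eqP; rewrite -addr_eq0 two_x0.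
by rewrite addr_eq0 oppx => /eqP->; apply: eqxx.
Qed.

Lemma palindromic_numbering (V : finZmodType) : (forall x : V, x + x = 0 -> x = 0)%R ->
  exists2 k, #|V| = k.*2.+1 & exists u : V -> nat, numbering #|V| (mirror k.*2) u.
Proof.
move=> two_x0; have oppK : involutive (@GRing.opp V) by exact: opprK.
have opp_fixE (x : V) : (- x == x)%R = (x == 0)%R.
  apply/idP/idP=> [|/eqP->]; last by rewrite oppr0.
  by rewrite eq_sym -addr_eq0 => /eqP/two_x0->.
have card_pe := card_palindromic_enum oppK opp_fixE.
have size_pe := size_palindromic_enum (@GRing.opp V) 0%R.
exists #|mirror_lower (@GRing.opp V)|; first by rewrite card_pe size_pe.
exists (index^~ (palindromic_enum (@GRing.opp V) 0%R)); split.
- by move=> x y; apply: index_inj; rewrite ?mem_palindromic_enum.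
- by move=> x; rewrite card_pe index_mem mem_palindromic_enum.
- move=> x1 x2 /eqP; rewrite addrC addr_eq0 => /eqP->.
  by rewrite /mirror (index_palindromic_enum_mirror oppK opp_fixE) size_pe.
Qed.

Variant finField_numbering (F : finFieldType) : Prop :=
  | Char2Numbering h (u : F -> nat) of #|F| = h.*2 & numbering #|F| eqn u
  | OddNumbering k (u : F -> nat) of #|F| = k.*2.+1 & numbering #|F| (mirror k.*2) u.

Lemma finField_numberingP (F : finFieldType) : finField_numbering F.
Proof.
have [two0|two_neq0] := eqVneq (2%:R : F)%R 0%R.
  apply: (@Char2Numbering _ #|F|./2).
    by rewrite even_halfK // -dvdn2 card_even_of_char2.
  by apply: enum_rank_numbering => x; rewrite -mulr2n -mulr_natr two0 mulr0.
have two_x0 (x : F) : (x + x = 0 -> x = 0)%R.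
  by rewrite -mulr2n -mulr_natr => /eqP; rewrite mulf_eq0 (negbTE two_neq0) orbF => /eqP.
have [k card_k [u num_u]] := palindromic_numbering two_x0.
exact: OddNumbering card_k num_u.
Qed.

Lemma latin_sum_of_table (F1 F2 : finFieldType) K m n R S
    (u : F1 -> nat) (v : F2 -> nat) (M : nat -> nat -> nat) :
  numbering m R u -> numbering n S v -> latin_table K m n R S M ->
  exists L : F1 -> F2 -> 'I_K, latin_sum [set: F1] [set: F2] L.
Proof.
move=> [u_inj u_lt Ru] [v_inj v_lt Sv] [M_lt M_latin].
exists (fun x y => Ordinal (M_lt _ _ (u_lt x) (v_lt y))) => x1 y1 x2 y2 _ _ _ _ neq.
have neq_uv : (u x1 != u x2) || (v y1 != v y2).
  by move: neq; rewrite xpair_eqE negb_and (inj_eq u_inj) (inj_eq v_inj).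
have [Rneq Sneq] := M_latin _ _ _ _ (u_lt x1) (v_lt y1) (u_lt x2) (v_lt y2) neq_uv.
by split=> /eqP sum0; [exact: Rneq (Ru _ _ sum0) | exact: Sneq (Sv _ _ sum0)].
Qed.

Theorem lemma11 (F1 F2 : finFieldType) (hF : #|F1| <= #|F2|) :
  exists L : F1 -> F2 -> 'I_(if (#|F1| == 3) && (#|F2| == 3) then 4 else #|F2|),
    latin_sum [set: F1] [set: F2] L.
Proof.
have F1_gt1 : 1 < #|F1| := finNzRing_gt1 F1.
case: (finField_numberingP F1) => [k u card1 num_u | k u card1 num_u];
case: (finField_numberingP F2) => [h v card2 num_v | h v card2 num_v];
(* a field of characteristic 2 has even order, hence is not Z_3 *)
case: ifP => [both3 | not_both3]; try (exfalso; lia);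
move: num_u num_v; rewrite card1 card2 => num_u num_v.
- by apply: latin_sum_of_table num_u num_v (cyclic_table_latin _); lia.
- by apply: latin_sum_of_table num_u num_v (eqn_mirror_table_latin _); lia.
- by apply: latin_sum_of_table num_u num_v (mirror_eqn_table_latin _); lia.
- have [k1 h1] : k = 1 /\ h = 1 by lia.
  rewrite k1 h1 in num_u num_v.
  exact: latin_sum_of_table num_u num_v mirror_table_3x3_latin.
- by apply: latin_sum_of_table num_u num_v (mirror_mirror_table_latin _ _); lia.
Qed.
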